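(* There exists a setting (with pairwise distinct budgets) in which no envy-free assignment is realizable under the budget-oblivious second-price auction (BOSP).
   Context: Setting: there are $k\ge 1$ slots with public click-through rates $\theta_1>\theta_2>\dots>\theta_k>0$, and $n\ge k$ players. Player $i$ has a private value per click $v_i\ge 0$ and a budget $B_i>0$; the budgets $B_1,\dots,B_n$ are pairwise distinct. A setting consists of $k,n,(\theta_j),(v_i),(B_i)$ together with a fixed strict priority order on the players used to break all ties. Each player $i$ submits a value-bid $b_i\ge 0$ and a budget-bid $g_i\ge 0$; a mechanism outputs an injective partial slot assignment (assigned player $i$ gets slot $s(i)\in\{1,\dots,k\}$) and a price per click $p(i)\ge0$ for each assigned player; unassigned players pay nothing. The utility of player $i$ is $u_i=0$ if $i$ is unassigned, $u_i=\theta_{s(i)}(v_i-p(i))$ if $i$ is assigned and $\theta_{s(i)}p(i)\le B_i$, and $u_i=-\infty$ if $i$ is assigned and $\theta_{s(i)}p(i)>B_i$. BOSP: order the players by decreasing value-bid (ties broken by the priority order); for $j\le k$ the $j$-th player in this order gets slot $j$ and pays per click the value-bid of the $(j+1)$-th player in the order (0 if there is none); the remaining players are unassigned. Budget-bids are ignored. Envy-free assignment: an assignment of each of the $k$ slots to a distinct player, with a price per click $p(i)\ge 0$ for each assigned player $i$, such that for every player $i$ (assigned or not) and every assigned player $i'$ (including $i'=i$): $u_i\ge \max\{\theta_{s(i')}(v_i-p(i')),0\}$ if $\theta_{s(i')}p(i')\le B_i$, and $u_i\ge 0$ otherwise, where $u_i$ is player $i$'s utility in the assignment (computed with the true $v_i,B_i$).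 It is realizable under a mechanism if some bid profile $(b_i,g_i)_i$ makes the mechanism output exactly this slot assignment and these prices. *)

From Stdlib Require Import Reals Lra Arith List.
Import ListNotations.
Open Scope R_scope.

(* Players are 0..n-1, slots are 1..k.  An outcome is a partial slot
   assignment [s : nat -> option nat] and per-click prices [p : nat -> R]
   (only meaningful for assigned players).  The tie-breaking priority order
   is given by an injective rank function [prio] on the players: a smaller
   rank means higher priority. *)

Definition valid_setting (k n : nat) (theta v B : nat -> R) (prio : nat -> nat) : Prop :=
  (1 <= k)%nat /\ (k <= n)%nat /\
  (forall j, (1 <= j)%nat -> (j < k)%nat -> theta (S j) < theta j) /\
  0 < theta k /\
  (forall i, (i < n)%nat -> 0 <= v i) /\
  (forall i, (i < n)%nat -> 0 < B i) /\
  (forall i i', (i < n)%nat -> (i' < n)%nat -> B i = B i' -> i = i') /\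
  (forall i i', (i < n)%nat -> (i' < n)%nat -> prio i = prio i' -> i = i').

(* Extended-real utility: [None] stands for -infinity. *)
Definition utility (theta v B : nat -> R) (s : nat -> option nat) (p : nat -> R)
  (i : nat) : option R :=
  match s i with
  | None => Some 0
  | Some j => if Rle_dec (theta j * p i) (B i)
              then Some (theta j * (v i - p i)) else None
  end.

Definition ext_ge (u : option R) (x : R) : Prop :=
  match u with Some r => x <= r | None => False end.

Definition full_assignment (k n : nat) (s : nat -> option nat) (p : nat -> R) : Prop :=
  (forall i j, s i = Some j -> (i < n)%nat /\ (1 <= j)%nat /\ (j <= k)%nat /\ 0 <= p i) /\
  (forall i i' j, s i = Some j -> s i' = Some j -> i = i') /\
  (forall j, (1 <= j)%nat -> (j <= k)%nat -> exists i, s i = Some j).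

Definition envy_free (k n : nat) (theta v B : nat -> R)
  (s : nat -> option nat) (p : nat -> R) : Prop :=
  full_assignment k n s p /\
  forall i i' j, (i < n)%nat -> s i' = Some j ->
    (theta j * p i' <= B i ->
       ext_ge (utility theta v B s p i) (Rmax (theta j * (v i - p i')) 0)) /\
    (~ theta j * p i' <= B i -> ext_ge (utility theta v B s p i) 0).

Definition precedes (prio : nat -> nat) (b : nat -> R) (i' i : nat) : bool :=
  if Rlt_dec (b i) (b i') then true
  else if Req_EM_T (b i') (b i) then Nat.ltb (prio i') (prio i) else false.

(* 0-based position of player i in the order. *)
Definition position (n : nat) (prio : nat -> nat) (b : nat -> R) (i : nat) : nat :=
  length (filter (fun i' => precedes prio b i' i) (seq 0 n)).

(* The outcome (s, p) is the output of BOSP on value-bids b (budget-bids are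
   ignored): the player at 0-based position q < k gets slot q+1 and pays the
   value-bid of the player at position q+1 (0 if there is none); others are
   unassigned. *)
Definition bosp_outputs (k n : nat) (prio : nat -> nat) (b : nat -> R)
  (s : nat -> option nat) (p : nat -> R) : Prop :=
  (forall i, (n <= i)%nat -> s i = None) /\
  forall i, (i < n)%nat ->
    let q := position n prio b i in
    if Nat.ltb q k then
      s i = Some (S q) /\
      ((exists i', (i' < n)%nat /\ position n prio b i' = S q /\ p i = b i') \/
       ((forall i', (i' < n)%nat -> position n prio b i' <> S q) /\ p i = 0))
    else s i = None.

(* Realizable under BOSP: some bid profile (value-bids b, budget-bids g)
   makes BOSP output exactly this slot assignment and these prices. *)
Definition realizable_BOSP (k n : nat) (prio : nat -> nat)
  (s : nat -> option nat) (p : nat -> R) : Prop :=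
  exists b g : nat -> R,
    (forall i, (i < n)%nat -> 0 <= b i /\ 0 <= g i) /\
    bosp_outputs k n prio b s p.

From Stdlib Require Import Reals.
From Stdlib Require Import Lra Lia List.
Open Scope R_scope.

(* Under BOSP with nonnegative value-bids, the price per click
   never increases down the slots: the winner of slot j pays the bid of the
   winner y of slot j+1, while y pays the bid of the player right after it in
   the order (or 0), which cannot exceed y's own bid.  On the other hand, in an envy-free
   assignment every assigned player is within budget, and an unassigned player
   who can afford a slot does not want it.
   In the setting with two slots (theta = 2, 1) and three players with values
   (2, 3, 3) and budgets (4, 2, 3), the slot-1 winner x pays at most B_x / 2,
   and B_x / 2 is both affordable for, and strictly below the value of, the
   unassigned player u.  Hence if the slot-2 price did not exceed the slot-1
   price, u would envy slot 2.  So envy-freeness forces p(slot 2) > p(slot 1),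
   which BOSP can never output. *)

Lemma precedes_higher_bid (prio : nat -> nat) (b : nat -> R) (i' i : nat) :
  b i < b i' -> precedes prio b i' i = true.
Proof. intros H. unfold precedes. destruct (Rlt_dec (b i) (b i')); [reflexivity | lra]. Qed.

Lemma precedes_bid_ge (prio : nat -> nat) (b : nat -> R) (i' i : nat) :
  precedes prio b i' i = true -> b i <= b i'.
Proof.
  unfold precedes. destruct (Rlt_dec (b i) (b i')); [lra|].
  destruct (Req_EM_T (b i') (b i)); [lra | discriminate].
Qed.

Lemma precedes_irrefl (prio : nat -> nat) (b : nat -> R) (i : nat) :
  precedes prio b i i = false.
Proof.
  unfold precedes. destruct (Rlt_dec (b i) (b i)); [lra|].
  destruct (Req_EM_T (b i) (b i)); [apply Nat.ltb_irrefl | reflexivity].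
Qed.

Lemma filter_length_le {A : Type} (f g : A -> bool) (l : list A) :
  (forall a, In a l -> f a = true -> g a = true) ->
  (length (filter f l) <= length (filter g l))%nat.
Proof.
  induction l as [|a l IH]; intros Hfg; simpl; [lia|].
  specialize (IH (fun a' h => Hfg a' (or_intror h))).
  destruct (f a) eqn:Fa; [rewrite (Hfg a (or_introl eq_refl) Fa); simpl; lia|].
  destruct (g a); simpl; lia.
Qed.

Lemma filter_length_lt {A : Type} (f g : A -> bool) (z : A) (l : list A) :
  (forall a, In a l -> f a = true -> g a = true) ->
  In z l -> f z = false -> g z = true ->
  (length (filter f l) < length (filter g l))%nat.
Proof.
  intros Hfg Hz Hfz Hgz.
  induction l as [|a l IH]; [destruct Hz|]; simpl.
  destruct Hz as [<- | Hz].
  - rewrite Hfz, Hgz. simpl.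
    pose proof (filter_length_le f g l (fun a' h => Hfg a' (or_intror h))). lia.
  - specialize (IH (fun a' h => Hfg a' (or_intror h)) Hz).
    destruct (f a) eqn:Fa; [rewrite (Hfg a (or_introl eq_refl) Fa); simpl; lia|].
    destruct (g a); simpl; lia.
Qed.

(* A player with a strictly higher value-bid has a strictly smaller position:
   everyone preceding z also precedes y, and z itself precedes y. *)
Lemma position_lt_of_bid_lt (n : nat) (prio : nat -> nat) (b : nat -> R) (z y : nat) :
  (z < n)%nat -> b y < b z -> (position n prio b z < position n prio b y)%nat.
Proof.
  intros Hz Hzy. unfold position.
  apply filter_length_lt with (z := z).
  - intros i _ Hiz. apply precedes_higher_bid.
    apply precedes_bid_ge in Hiz. lra.
  - apply in_seq. lia.
  - apply precedes_irrefl.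
  - apply precedes_higher_bid. exact Hzy.
Qed.

Lemma bosp_assigned_position (k n : nat) (prio : nat -> nat) (b : nat -> R)
  (s : nat -> option nat) (p : nat -> R) (i q : nat) :
  bosp_outputs k n prio b s p -> s i = Some (S q) ->
  (i < n)%nat /\ position n prio b i = q /\ (q < k)%nat.
Proof.
  intros [Hnone Hout] Hi.
  assert (Hin : (i < n)%nat).
  { destruct (Nat.lt_ge_cases i n) as [h|h]; [exact h|].
    rewrite (Hnone i h) in Hi. discriminate. }
  specialize (Hout i Hin). cbv zeta in Hout.
  destruct (Nat.ltb (position n prio b i) k) eqn:Hk; [|congruence].
  destruct Hout as [Hs _]. rewrite Hi in Hs. injection Hs as Hs.
  apply Nat.ltb_lt in Hk. split; [exact Hin | split; lia].
Qed.

Lemma bosp_price_nonincreasing (k n : nat) (prio : nat -> nat) (b : nat -> R)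
  (s : nat -> option nat) (p : nat -> R) (x y q : nat) :
  (forall i, (i < n)%nat -> 0 <= b i) ->
  bosp_outputs k n prio b s p ->
  (forall i i' j, s i = Some j -> s i' = Some j -> i = i') ->
  s x = Some (S q) -> s y = Some (S (S q)) -> p y <= p x.
Proof.
  intros Hbnn Hbosp Hinj Hx Hy.
  destruct (bosp_assigned_position _ _ _ _ _ _ _ _ Hbosp Hx) as [Hxn [Posx _]].
  destruct (bosp_assigned_position _ _ _ _ _ _ _ _ Hbosp Hy) as [Hyn [Posy Hqk]].
  assert (Outx := proj2 Hbosp x Hxn). assert (Outy := proj2 Hbosp y Hyn).
  cbv zeta in Outx, Outy. rewrite Posx in Outx. rewrite Posy in Outy.
  replace (Nat.ltb q k) with true in Outx by (symmetry; apply Nat.ltb_lt; lia).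
  replace (Nat.ltb (S q) k) with true in Outy by (symmetry; apply Nat.ltb_lt; lia).
  assert (Hpx : p x = b y).
  { destruct Outx as [_ [[i' [Hi'n [Posi' ->]]] | [Hnobody _]]].
    - assert (Outi' := proj2 Hbosp i' Hi'n). cbv zeta in Outi'.
      rewrite Posi' in Outi'.
      replace (Nat.ltb (S q) k) with true in Outi' by (symmetry; apply Nat.ltb_lt; lia).
      rewrite (Hinj i' y _ (proj1 Outi') Hy). reflexivity.
    - exfalso. exact (Hnobody y Hyn Posy). }
  rewrite Hpx.
  destruct Outy as [_ [[z [Hzn [Posz ->]]] | [_ ->]]].
  - destruct (Rle_lt_dec (b z) (b y)) as [Hle | Hlt]; [exact Hle|].
    pose proof (position_lt_of_bid_lt n prio b z y Hzn Hlt). lia.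
  - apply Hbnn, Hyn.
Qed.

(* Every assigned player stays within budget (its utility is finite). *)
Lemma envy_free_within_budget (k n : nat) (theta v B : nat -> R)
  (s : nat -> option nat) (p : nat -> R) (i j : nat) :
  envy_free k n theta v B s p -> s i = Some j -> theta j * p i <= B i.
Proof.
  intros [[Hwf _] Hef] Hi.
  destruct (Hwf i j Hi) as [Hin _].
  destruct (Hef i i j Hin Hi) as [Haff Hunaff].
  assert (Hfin : exists r, ext_ge (utility theta v B s p i) r).
  { destruct (Rle_dec (theta j * p i) (B i)) as [h|h]; eexists; [exact (Haff h) | exact (Hunaff h)]. }
  destruct Hfin as [r Hr]. unfold utility in Hr. rewrite Hi in Hr.
  destruct (Rle_dec (theta j * p i) (B i)) as [h|h]; [exact h | destruct Hr].
Qed.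

Lemma envy_free_unassigned_no_gain (k n : nat) (theta v B : nat -> R)
  (s : nat -> option nat) (p : nat -> R) (u i j : nat) :
  envy_free k n theta v B s p -> (u < n)%nat -> s u = None -> s i = Some j ->
  theta j * p i <= B u -> theta j * (v u - p i) <= 0.
Proof.
  intros [_ Hef] Hun Hu Hi Haff.
  pose proof (proj1 (Hef u i j Hun Hi) Haff) as Hge.
  unfold utility in Hge. rewrite Hu in Hge. simpl in Hge.
  pose proof (Rmax_l (theta j * (v u - p i)) 0). lra.
Qed.

Lemma two_slots_others_unassigned (n : nat) (s : nat -> option nat) (p : nat -> R)
  (x y u : nat) :
  full_assignment 2 n s p -> s x = Some 1%nat -> s y = Some 2%nat ->
  u <> x -> u <> y -> s u = None.
Proof.
  intros [Hwf [Hinj _]] Hx Hy Hux Huy.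
  destruct (s u) as [j|] eqn:Hu; [|reflexivity].
  destruct (Hwf u j Hu) as [_ [Hj1 [Hj2 _]]].
  exfalso. assert (j = 1%nat \/ j = 2%nat) as [-> | ->] by lia.
  - exact (Hux (Hinj u x _ Hu Hx)).
  - exact (Huy (Hinj u y _ Hu Hy)).
Qed.

Definition ex_theta (j : nat) : R := match j with 1%nat => 2 | _ => 1 end.
Definition ex_value (i : nat) : R := match i with 0%nat => 2 | _ => 3 end.
Definition ex_budget (i : nat) : R :=
  match i with 0%nat => 4 | 1%nat => 2 | _ => 3 end.
Definition ex_prio (i : nat) : nat := i.

Lemma ex_setting_valid : valid_setting 2 3 ex_theta ex_value ex_budget ex_prio.
Proof.
  unfold valid_setting, ex_prio. repeat split; try lia.
  - intros j Hj1 Hj2. replace j with 1%nat by lia. simpl. lra.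
  - simpl. lra.
  - intros i Hi. destruct i as [|[|[|]]]; simpl; lra.
  - intros i Hi. destruct i as [|[|[|]]]; simpl; lra.
  - intros i i' Hi Hi' E.
    destruct i as [|[|[|]]], i' as [|[|[|]]]; simpl in E; try lia; lra.
Qed.

Lemma ex_half_budget_bounds (x u : nat) :
  (x < 3)%nat -> (u < 3)%nat -> x <> u ->
  ex_budget x / 2 <= ex_budget u /\ ex_budget x / 2 < ex_value u.
Proof.
  intros Hx Hu Hxu.
  destruct x as [|[|[|]]], u as [|[|[|]]]; try lia; simpl; lra.
Qed.

Lemma ex_envy_free_prices_increase (s : nat -> option nat) (p : nat -> R) (x y : nat) :
  envy_free 2 3 ex_theta ex_value ex_budget s p ->
  s x = Some 1%nat -> s y = Some 2%nat -> p x < p y.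
Proof.
  intros Hef Hx Hy.
  destruct (Rlt_or_le (p x) (p y)) as [Hlt | Hyx]; [exact Hlt | exfalso].
  pose proof (proj1 (proj1 Hef) x 1%nat Hx) as [Hx3 _].
  pose proof (proj1 (proj1 Hef) y 2%nat Hy) as [Hy3 _].
  assert (Hxy : x <> y) by congruence.
  assert (exists u, (u < 3)%nat /\ u <> x /\ u <> y) as [u [Hu3 [Hux Huy]]].
  { destruct x as [|[|[|]]], y as [|[|[|]]]; try lia;
      first [exists 0%nat; lia | exists 1%nat; lia | exists 2%nat; lia]. }
  pose proof (two_slots_others_unassigned 3 s p x y u (proj1 Hef) Hx Hy Hux Huy) as Hu.
  pose proof (envy_free_within_budget _ _ _ _ _ _ _ x 1%nat Hef Hx) as Hbx.
  simpl in Hbx.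
  destruct (ex_half_budget_bounds x u Hx3 Hu3 (not_eq_sym Hux)) as [Haff Hval].
  pose proof (envy_free_unassigned_no_gain _ _ _ _ _ _ _ u y 2%nat Hef Hu3 Hu Hy)
    as Hnoenvy.
  simpl in Hnoenvy. lra.
Qed.

Theorem corollary1 :
  exists (k n : nat) (theta v B : nat -> R) (prio : nat -> nat),
    valid_setting k n theta v B prio /\
    ~ (exists (s : nat -> option nat) (p : nat -> R),
         envy_free k n theta v B s p /\ realizable_BOSP k n prio s p).
Proof.
  exists 2%nat, 3%nat, ex_theta, ex_value, ex_budget, ex_prio.
  split; [exact ex_setting_valid|].
  intros [s [p [Hef [b [g [Hbids Hbosp]]]]]].
  pose proof (proj1 Hef) as [_ [Hinj Hcover]].
  destruct (Hcover 1%nat) as [x Hx]; try lia.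
  destruct (Hcover 2%nat) as [y Hy]; try lia.
  assert (Hbosp_order : p y <= p x).
  { apply (bosp_price_nonincreasing 2 3 ex_prio b s p x y 0); auto.
    intros i Hi. exact (proj1 (Hbids i Hi)). }
  pose proof (ex_envy_free_prices_increase s p x y Hef Hx Hy). lra.
Qed.
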